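(* Let $G=(I\cup C,E)$ be a split graph whose clique vertices are labelled $1,\dots,k$ so that conditions (i)–(iii) below hold, and let $w$ be the word constructed below. If $x,y\in V=I\cup C$ are adjacent in $G$, then $x$ and $y$ alternate in $w$.
   Context: Words: a word over a finite set $X$ is a finite sequence of elements of $X$; for a word $u$ and $S\subseteq X$, $u|_S$ is the subsequence of $u$ consisting of all occurrences of letters of $S$; $u^R$ is the reversal of $u$. Two letters $x,y$ alternate in $u$ if $u|_{\{x,y\}}$ is of the form $xyxy\cdots$ or $yxyx\cdots$ (of even or odd length); otherwise they do not alternate. For integers $a\le b$, $[a,b]=\{a,a+1,\dots,b\}$. Setting: $G=(I\cup C,E)$ is a split graph: $C$ induces a clique, $I$ induces an independent set, and $C$ is inclusion-wise maximal, i.e. no vertex of $I$ is adjacent to all vertices of $C$. The vertices of $C$ are labelled by $1,\dots,k$ where $k=|C|$, and for all $a,b\in I$: (i) either $N(a)=[1,m]\cup[n,k]$ for some $m<n$, or $N(a)=[l,r]$ for some $l\le r$; (ii) if $N(a)=[1,m]\cup[n,k]$ ($m<n$) and $N(b)=[l,r]$ ($l\le r$), then $l>m$ or $r<n$; (iii) if $N(a)=[1,m]\cup[n,k]$ and $N(b)=[1,m']\cup[n',k]$ ($m<n$, $m'<n'$), then $m'<n$ and $m<n'$. Let $B$ be the set of $a\in I$ whose neighbourhood is an integer interval $[l_a,r_a]$, and $A=I\setminus B$; for $a\in A$ write $N(a)=[1,m_a]\cup[n_a,k]$ with $m_a<n_a$. Construction of $w$: start with $p_1=p_2=p_3=12\cdots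 k$. Process the vertices of $I$ one at a time in an arbitrary fixed order; ''replace $y$ in $p$ by $yx$'' (resp. $xy$) means replacing the unique occurrence of the letter $y$ in $p$ by the two letters $yx$ (resp. $xy$). For $a\in A$: replace $m_a$ in $p_1$ by $m_a a$, and replace $n_a$ in $p_2$ by $a n_a$. For $a\in B$: replace $l_a$ in $p_1$ by $a l_a$, and replace $r_a$ in $p_2$ by $r_a a$. After all vertices of $I$ are processed, let $d=\max(\{1\}\cup\{m_a: a\in A\})$ and replace the letter $d$ in $p_3$ by the word $d\,(p_1|_A)^R$. Finally set $w=p_1\,(p_1|_B)^R\,p_2\,p_3$ (a $3$-uniform word over $V$). *)

From mathcomp Require Import all_boot.
Set Implicit Arguments. Unset Strict Implicit. Unset Printing Implicit Defensive.

(* Vertices of the split graph: [inl i] is the clique vertex labelled i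
   (1 <= i <= k), [inr a] is the independent vertex a : T. *)
Definition vtx (T : eqType) := (nat + T)%type.

Definition restr2 (T : eqType) (x y : vtx T) (u : seq (vtx T)) : seq (vtx T) :=
  [seq z <- u | (z == x) || (z == y)].

Definition altw (T : eqType) (x y : vtx T) (n : nat) : seq (vtx T) :=
  mkseq (fun i => if odd i then y else x) n.

Definition alternate (T : eqType) (x y : vtx T) (u : seq (vtx T)) : Prop :=
  let s := restr2 x y u in s = altw x y (size s) \/ s = altw y x (size s).

Definition repl_after (T : eqType) (y x : vtx T) (p : seq (vtx T)) :=
  flatten [seq (if z == y then [:: z; x] else [:: z]) | z <- p].
Definition repl_before (T : eqType) (y x : vtx T) (p : seq (vtx T)) :=
  flatten [seq (if z == y then [:: x; z] else [:: z]) | z <- p].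

Definition p0 (T : eqType) (k : nat) : seq (vtx T) := [seq inl i | i <- iota 1 k].

Section Construction.
Variables (T : eqType) (k : nat) (I : seq T) (inA : T -> bool)
          (m n l r : T -> nat).

Definition step1 (p : seq (vtx T)) (a : T) : seq (vtx T) :=
  if inA a then repl_after (inl (m a)) (inr a) p
  else repl_before (inl (l a)) (inr a) p.
Definition step2 (p : seq (vtx T)) (a : T) : seq (vtx T) :=
  if inA a then repl_before (inl (n a)) (inr a) p
  else repl_after (inl (r a)) (inr a) p.

Definition p1 : seq (vtx T) := foldl step1 (p0 T k) I.
Definition p2 : seq (vtx T) := foldl step2 (p0 T k) I.

Definition isA (v : vtx T) : bool := if v is inr a then inA a else false.
Definition isB (v : vtx T) : bool := if v is inr a then ~~ inA a else false.

Definition dmax : nat := maxn 1 (\max_(a <- I | inA a) m a).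

Definition p3 : seq (vtx T) :=
  flatten [seq (if z == inl dmax then inl dmax :: rev (filter isA p1) else [:: z])
          | z <- p0 T k].

Definition word_w : seq (vtx T) := p1 ++ rev (filter isB p1) ++ p2 ++ p3.
End Construction.

Definition inV (T : eqType) (k : nat) (I : seq T) (v : vtx T) : bool :=
  match v with inl i => (1 <= i <= k) | inr a => a \in I end.

Definition adj (T : eqType) (N : T -> nat -> bool) (x y : vtx T) : bool :=
  match x, y with
  | inl i, inl j => i != j
  | inl i, inr a => N a i
  | inr a, inl i => N a i
  | inr _, inr _ => false
  end.

From mathcomp Require Import all_boot zify.
Set Implicit Arguments. Unset Strict Implicit. Unset Printing Implicit Defensive.

(* Restricting w to two letters {x, y} can be done block by block, and inside
   p1 and p2 every insertion of an independent vertex other than x, y becomes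
   invisible.  Two clique vertices i < j therefore read ij in p1, p2 and p3, and
   the B-block contains neither.  For a clique vertex i and an independent
   vertex a, each block is the two-letter word obtained by inserting a alone
   into 12...k.  If a is in A, then m_a <= d < n_a by (iii), so i <= m_a gives
   ia in p1, p2 and p3, while i >= n_a gives ai in all three.  If a is in B and
   l_a <= i <= r_a, the blocks read ai, a, ia, i. *)


Lemma filter_swap (U : Type) (P Q : pred U) (s : seq U) :
  filter P (filter Q s) = filter Q (filter P s).
Proof. by rewrite -!filter_predI; apply: eq_filter => z /=; rewrite andbC. Qed.

Section Filters.
Variable T : eqType.
Implicit Types (P Q : pred (vtx T)) (p s : seq (vtx T)) (x y : vtx T).

Lemma filter_subpred P Q s :
  subpred P Q -> filter P (filter Q s) = filter P s.
Proof.
move=> PQ; rewrite -filter_predI; apply: eq_filter => z /=.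
by case Pz: (P z); rewrite // PQ.
Qed.

Lemma filter_flatten_map_id P (g : vtx T -> seq (vtx T)) s :
  (forall z, filter P (g z) = filter P [:: z]) ->
  filter P (flatten (map g s)) = filter P s.
Proof. by move=> gP; elim: s => //= z s IH; rewrite filter_cat gP IH /=; case: (P z). Qed.

Lemma filter_repl_after_id P y x p :
  ~~ P x -> filter P (repl_after y x p) = filter P p.
Proof.
move=> Px; apply: filter_flatten_map_id => z.
by case: (z == y); rewrite //= (negbTE Px); case: (P z).
Qed.

Lemma filter_repl_before_id P y x p :
  ~~ P x -> filter P (repl_before y x p) = filter P p.
Proof.
move=> Px; apply: filter_flatten_map_id => z.
by case: (z == y); rewrite //= (negbTE Px); case: (P z).
Qed.

Lemma filter_repl_after P y x p :
  P x -> P y -> filter P (repl_after y x p) = repl_after y x (filter P p).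
Proof.
move=> Px Py; elim: p => //= z p IH; rewrite /repl_after /= in IH *.
rewrite filter_cat IH; case: (z =P y) => [->|/eqP zy]; first by rewrite /= Px Py /= eqxx.
by rewrite /=; case: ifP => _ //=; rewrite (negbTE zy).
Qed.

Lemma filter_repl_before P y x p :
  P x -> P y -> filter P (repl_before y x p) = repl_before y x (filter P p).
Proof.
move=> Px Py; elim: p => //= z p IH; rewrite /repl_before /= in IH *.
rewrite filter_cat IH; case: (z =P y) => [->|/eqP zy]; first by rewrite /= Px Py /= eqxx.
by rewrite /=; case: ifP => _ //=; rewrite (negbTE zy).
Qed.

End Filters.

Section Alternation.
Variable T : eqType.
Implicit Types (x y : vtx T) (u : seq (vtx T)).

Lemma alternate_sym x y u : alternate x y u -> alternate y x u.
Proof.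
rewrite /alternate /restr2 (@eq_filter _ _ (fun z => (z == x) || (z == y))).
  by case; [right | left].
by move=> z; rewrite orbC.
Qed.

Lemma alternate_restr2 x y u c :
  restr2 x y u = altw x y c \/ restr2 x y u = altw y x c -> alternate x y u.
Proof. by rewrite /alternate; case=> ->; rewrite size_mkseq; [left | right]. Qed.

End Alternation.

Section FilterFold.
Variables (V A : eqType) (st : seq V -> A -> seq V) (Q : pred V).

Lemma filter_foldl_id q S :
  (forall q b, b \in S -> filter Q (st q b) = filter Q q) ->
  filter Q (foldl st q S) = filter Q q.
Proof.
elim: S q => //= b S IH q stQ.
rewrite IH ?stQ ?mem_head // => q' b' Sb'.
by apply: stQ; rewrite inE Sb' orbT.
Qed.

Lemma filter_foldl_single q S a :
  uniq S -> a \in S ->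
  (forall q b, b \in S -> b != a -> filter Q (st q b) = filter Q q) ->
  (forall q, filter Q (st q a) = st (filter Q q) a) ->
  filter Q (foldl st q S) = st (filter Q q) a.
Proof.
move=> uS /splitPr Sa; case: Sa uS => S1 S2.
rewrite uniq_catC /= mem_cat negb_or => /andP[/andP[S2a S1a] _].
move=> stQ stQa; rewrite foldl_cat /= filter_foldl_id; last first.
  move=> q' b Sb; apply: stQ; first by rewrite mem_cat inE Sb !orbT.
  by apply: contraNneq S2a => <-.
rewrite stQa filter_foldl_id // => q' b Sb; apply: stQ; first by rewrite mem_cat Sb.
by apply: contraNneq S1a => <-.
Qed.

End FilterFold.

Section InitialWord.
Variables (T : eqType) (k : nat).
Implicit Types (P : pred (vtx T)) (w : seq (vtx T)).

Lemma filter_p0 P : (forall t, P (inl t)) -> filter P (p0 T k) = p0 T k.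
Proof. by move=> Pl; apply/all_filterP; rewrite all_map; apply/allP => t _; apply: Pl. Qed.

Lemma restr2_p0 i j : 1 <= i -> i < j -> j <= k ->
  restr2 (inl i) (inl j) (p0 T k) = [:: inl i; inl j].
Proof.
move=> i1 ij jk; rewrite /restr2 /p0 filter_map.
suff -> : [seq t <- iota 1 k | (t == i) || (t == j)] = [:: i; j] by [].
apply: (irr_sorted_eq (leT := ltn)).
- exact: ltn_trans.
- exact: ltnn.
- exact/sorted_filter/iota_ltn_sorted/ltn_trans.
- by rewrite /= ij.
by move=> t; rewrite mem_filter mem_iota !inE; lia.
Qed.

Lemma flatten_filter_inl P i s : (forall t, P (inl t) = (t == i)) ->
  flatten [seq filter P [:: inl t] | t <- s] = nseq (count_mem i s) (inl i).
Proof.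
move=> Pl; elim: s => //= t s ->; rewrite Pl eq_sym.
by case: eqP => [->|].
Qed.

Lemma filter_flatten_p0 P (g : vtx T -> seq (vtx T)) i j :
  1 <= i <= k -> 1 <= j <= k -> (forall t, P (inl t) = (t == i)) ->
  (forall z, z != inl j -> g z = [:: z]) ->
  filter P (flatten (map g (p0 T k))) =
  nseq (i < j) (inl i) ++ filter P (g (inl j)) ++ nseq (j < i) (inl i).
Proof.
move=> /andP[i1 ik] /andP[j1 jk] Pl gid.
have -> : k = j.-1 + (k - j).+1 by lia.
rewrite /p0 iotaD /= -[1 + j.-1]/j.-1.+1 prednK // !map_cat flatten_cat /=.
rewrite !filter_cat !filter_flatten -!map_comp.
have gl (s : seq nat) : j \notin s ->
    flatten [seq ((filter P \o g) \o inl) t | t <- s] = nseq (count_mem i s) (inl i).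
  move=> js; rewrite -(@flatten_filter_inl P i s Pl); congr flatten.
  apply/eq_in_map => t ts /=; rewrite gid //.
  by apply: contraNneq js => -[<-].
rewrite !gl ?mem_iota; try lia.
rewrite !count_uniq_mem ?iota_uniq // !mem_iota.
by congr (nseq _ _ ++ _ ++ nseq _ _); lia.
Qed.

Lemma filter_insert_after_p0 P (g : vtx T -> seq (vtx T)) i j w :
  1 <= i <= k -> 1 <= j <= k -> (forall t, P (inl t) = (t == i)) ->
  (forall z, z != inl j -> g z = [:: z]) -> g (inl j) = inl j :: w ->
  filter P (flatten (map g (p0 T k))) =
  if i <= j then inl i :: filter P w else filter P w ++ [:: inl i].
Proof.
move=> hi hj Pl gid gj; rewrite (filter_flatten_p0 hi hj Pl gid) gj /= Pl.
by case: ltngtP => [ij|ji|->]; rewrite ?cats0.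
Qed.

Lemma filter_insert_before_p0 P (g : vtx T -> seq (vtx T)) i j w :
  1 <= i <= k -> 1 <= j <= k -> (forall t, P (inl t) = (t == i)) ->
  (forall z, z != inl j -> g z = [:: z]) -> g (inl j) = w ++ [:: inl j] ->
  filter P (flatten (map g (p0 T k))) =
  if i < j then inl i :: filter P w else filter P w ++ [:: inl i].
Proof.
move=> hi hj Pl gid gj; rewrite (filter_flatten_p0 hi hj Pl gid) gj filter_cat /= Pl.
by case: ltngtP => [ij|ji|->]; rewrite ?cats0 // -catA.
Qed.

End InitialWord.

Section Construction.
Variables (T : eqType) (k : nat) (I : seq T) (inA : T -> bool) (m n l r : T -> nat).
Hypothesis uniqI : uniq I.

Local Notation P1 := (p1 k I inA m l).
Local Notation P2 := (p2 k I inA n r).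
Local Notation P3 := (p3 k I inA m l).
Local Notation d := (dmax I inA m).

Definition isC (v : vtx T) : bool := if v is inl _ then true else false.

Definition cliqueU1 (a : T) : pred (vtx T) := predU1 (inr a) isC.

Lemma cliqueU1_inl a t : cliqueU1 a (inl t).
Proof. by rewrite /cliqueU1 /= ?orbT. Qed.

Lemma cliqueU1_inr a b : cliqueU1 a (inr b) = (b == a).
Proof. by rewrite /cliqueU1 /= orbF. Qed.

Definition inserts (st : seq (vtx T) -> T -> seq (vtx T)) :=
  forall b, exists j, st^~ b =1 repl_after (inl j) (inr b) \/
                      st^~ b =1 repl_before (inl j) (inr b).

Lemma step1_inserts : inserts (step1 inA m l).
Proof.
by move=> b; case Eb: (inA b); [exists (m b); left | exists (l b); right] => q;
  rewrite /step1 Eb.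
Qed.

Lemma step2_inserts : inserts (step2 inA n r).
Proof.
by move=> b; case Eb: (inA b); [exists (n b); right | exists (r b); left] => q;
  rewrite /step2 Eb.
Qed.

Lemma filter_isC_foldl st : inserts st -> filter isC (foldl st (p0 T k) I) = p0 T k.
Proof.
move=> ins; rewrite filter_foldl_id ?filter_p0 // => q b _.
by case: (ins b) => j [->|->]; rewrite ?filter_repl_after_id ?filter_repl_before_id.
Qed.

Lemma filter_cliqueU1_foldl st a : inserts st -> a \in I ->
  filter (cliqueU1 a) (foldl st (p0 T k) I) = st (p0 T k) a.
Proof.
move=> ins Ia; rewrite (filter_foldl_single _ uniqI Ia) ?filter_p0 // => q.
  move=> b _ ba; case: (ins b) => j [->|->];
    by rewrite ?filter_repl_after_id ?filter_repl_before_id ?cliqueU1_inr.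
by case: (ins a) => j [E|E];
  rewrite !E ?filter_repl_after ?filter_repl_before ?cliqueU1_inr ?cliqueU1_inl.
Qed.

Lemma filter_isC_p1 : filter isC P1 = p0 T k.
Proof. exact/filter_isC_foldl/step1_inserts. Qed.

Lemma filter_isC_p2 : filter isC P2 = p0 T k.
Proof. exact/filter_isC_foldl/step2_inserts. Qed.

Lemma filter_isC_p3 : filter isC P3 = p0 T k.
Proof.
rewrite filter_flatten_map_id ?filter_p0 // => z; case: eqP => [->|_] //=.
rewrite filter_rev -filter_predI (@eq_filter _ _ pred0) ?filter_pred0 //.
by case=> [t|b] /=; rewrite ?andbF.
Qed.

Lemma inl_eq_or_inr i (a : T) t :
  ((inl t == inl i :> vtx T) || (inl t == inr a)) = (t == i).
Proof. by rewrite orbF. Qed.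

Lemma restr2_cliqueU1 i (a : T) (s : seq (vtx T)) :
  restr2 (inl i) (inr a) (filter (cliqueU1 a) s) = restr2 (inl i) (inr a) s.
Proof.
apply: filter_subpred => -[t|b] z_ia; rewrite ?cliqueU1_inl // cliqueU1_inr.
by case/orP: z_ia => /eqP // [->].
Qed.

Lemma restr2_word x y :
  restr2 x y (word_w k I inA m n l r) =
  restr2 x y P1 ++ rev (filter (isB inA) (restr2 x y P1)) ++ restr2 x y P2 ++ restr2 x y P3.
Proof. by rewrite /restr2 /word_w !filter_cat filter_rev filter_swap. Qed.

Lemma dmax_ge b : b \in I -> inA b -> m b <= d.
Proof. by move=> Ib Ab; apply: leq_trans (leq_maxr _ _); apply: leq_bigmax_seq. Qed.

Lemma dmax_lt j : 1 < j -> (forall b, b \in I -> inA b -> m b < j) -> d < j.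
Proof.
move=> j1 mj; rewrite gtn_max j1 /=.
suff : \max_(b <- I | inA b) m b <= j.-1 by lia.
by apply/bigmax_leqP_seq => b Ib Ab; have := mj b Ib Ab; lia.
Qed.

Variable N : T -> nat -> bool.
Hypothesis A_nbhd : forall a, a \in I -> inA a ->
  [/\ 1 <= m a, m a < n a, n a <= k & forall i, N a i = (1 <= i <= m a) || (n a <= i <= k)].
Hypothesis B_nbhd : forall a, a \in I -> ~~ inA a ->
  [/\ 1 <= l a, l a <= r a, r a <= k & forall i, N a i = (l a <= i <= r a)].
Hypothesis A_overlap : forall a b, a \in I -> b \in I -> inA a -> inA b -> m b < n a.

Lemma restr2_p1 i a : a \in I -> 1 <= i <= k ->
  restr2 (inl i) (inr a) P1 =
  if inA a then (if i <= m a then [:: inl i; inr a] else [:: inr a; inl i])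
  else if i < l a then [:: inl i; inr a] else [:: inr a; inl i].
Proof.
move=> Ia hi.
rewrite -restr2_cliqueU1 (filter_cliqueU1_foldl step1_inserts Ia) /restr2 /step1.
case Aa: (inA a).
  have [m1 mn nk _] := A_nbhd Ia Aa; have hm : 1 <= m a <= k by lia.
  by rewrite (filter_insert_after_p0 (j := m a) (w := [:: inr a]) hi hm)
     => [|t|z /negbTE ->|]; rewrite ?inl_eq_or_inr //= ?eqxx.
have [l1 lr rk _] := B_nbhd Ia (negbT Aa); have hl : 1 <= l a <= k by lia.
by rewrite (filter_insert_before_p0 (j := l a) (w := [:: inr a]) hi hl)
   => [|t|z /negbTE ->|]; rewrite ?inl_eq_or_inr //= ?eqxx.
Qed.

Lemma restr2_p2 i a : a \in I -> 1 <= i <= k ->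
  restr2 (inl i) (inr a) P2 =
  if inA a then (if i < n a then [:: inl i; inr a] else [:: inr a; inl i])
  else if i <= r a then [:: inl i; inr a] else [:: inr a; inl i].
Proof.
move=> Ia hi.
rewrite -restr2_cliqueU1 (filter_cliqueU1_foldl step2_inserts Ia) /restr2 /step2.
case Aa: (inA a).
  have [m1 mn nk _] := A_nbhd Ia Aa; have hn : 1 <= n a <= k by lia.
  by rewrite (filter_insert_before_p0 (j := n a) (w := [:: inr a]) hi hn)
     => [|t|z /negbTE ->|]; rewrite ?inl_eq_or_inr //= ?eqxx.
have [l1 lr rk _] := B_nbhd Ia (negbT Aa); have hr : 1 <= r a <= k by lia.
by rewrite (filter_insert_after_p0 (j := r a) (w := [:: inr a]) hi hr)
   => [|t|z /negbTE ->|]; rewrite ?inl_eq_or_inr //= ?eqxx.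
Qed.

Lemma restr2_p3 i a : 1 <= i <= k -> 1 <= d <= k ->
  restr2 (inl i) (inr a) P3 =
  let s := rev (filter (isA inA) (restr2 (inl i) (inr a) P1)) in
  if i <= d then inl i :: s else s ++ [:: inl i].
Proof.
move=> hi hd; rewrite /restr2 /p3.
rewrite (filter_insert_after_p0 (j := d) (w := rev (filter (isA inA) P1)) hi hd)
  => [|t|z /negbTE ->|]; rewrite ?inl_eq_or_inr ?eqxx //.
by rewrite filter_rev filter_swap.
Qed.

Lemma restr2_isC i j (s : seq (vtx T)) :
  restr2 (inl i) (inl j) (filter isC s) = restr2 (inl i) (inl j) s.
Proof. by apply: filter_subpred => -[]. Qed.

Lemma alternate_clique i j : 1 <= i -> i < j -> j <= k ->
  alternate (inl i) (inl j) (word_w k I inA m n l r).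
Proof.
move=> i1 ij jk; apply: (@alternate_restr2 _ _ _ _ 6); left.
rewrite restr2_word -(restr2_isC i j P1) -(restr2_isC i j P2) -(restr2_isC i j P3).
by rewrite filter_isC_p1 filter_isC_p2 filter_isC_p3 restr2_p0.
Qed.

Lemma alternate_clique_indep i a : 1 <= i <= k -> a \in I -> N a i ->
  alternate (inl i) (inr a) (word_w k I inA m n l r).
Proof.
move=> hi Ia Nai; apply: (@alternate_restr2 _ _ _ _ 6).
have hd : 1 <= d <= k.
  rewrite leq_maxl -ltnS; apply: dmax_lt => [|b Ib Ab]; first by lia.
  by have [] := A_nbhd Ib Ab; lia.
rewrite restr2_word restr2_p3 // restr2_p1 // restr2_p2 //.
case Aa: (inA a).
  have [m1 mn nk Na] := A_nbhd Ia Aa.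
  have md := dmax_ge Ia Aa.
  have dn : d < n a by apply: dmax_lt => [|b Ib Ab]; [lia | exact: A_overlap].
  rewrite Na in Nai; case/orP: Nai => [/andP[_ im] | /andP[ni _]].
    have -> : i < n a by lia.
    have -> : i <= d by lia.
    by rewrite im /= Aa; left.
  have -> : (i <= m a) = false by lia.
  have -> : (i < n a) = false by lia.
  have -> : (i <= d) = false by lia.
  by rewrite /= Aa; right.
have [l1 lr rk Na] := B_nbhd Ia (negbT Aa).
rewrite Na in Nai; case/andP: Nai => li ir.
by rewrite ltnNge li ir /= Aa if_same; right.
Qed.

End Construction.

Theorem lemma2 (T : eqType) (k : nat) (I : seq T) (N : T -> nat -> bool)
  (inA : T -> bool) (m n l r : T -> nat) :
  uniq I ->
  (forall a, a \in I -> exists i, 1 <= i <= k /\ ~~ N a i) ->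
  (forall a, a \in I -> inA a = false ->
     1 <= l a /\ l a <= r a /\ r a <= k /\
     forall i, N a i = (l a <= i <= r a)) ->
  (forall a, a \in I -> inA a = true ->
     [/\ 1 <= m a, m a < n a, n a <= k,
         (forall i, N a i = (1 <= i <= m a) || (n a <= i <= k)) &
         ~ (exists l' r', l' <= r' /\ forall i, N a i = (l' <= i <= r'))]) ->
  (forall a b, a \in I -> b \in I -> inA a = true -> inA b = false ->
     m a < l b \/ r b < n a) ->
  (forall a a', a \in I -> a' \in I -> inA a = true -> inA a' = true ->
     m a' < n a /\ m a < n a') ->
  forall x y : vtx T, inV k I x -> inV k I y -> adj N x y ->
    alternate x y (word_w k I inA m n l r).
Proof.
move=> uI _ HB HA _ HAA.
have mixed i a : 1 <= i <= k -> a \in I -> N a i ->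
    alternate (inl i) (inr a) (word_w k I inA m n l r).
  apply: (alternate_clique_indep uI) => [b Ib Ab | b Ib /negbTE Bb | b b' Ib Ib' Ab Ab'].
  - by case: (HA b Ib Ab).
  - by have [? [? [? ?]]] := HB b Ib Bb.
  - by case: (HAA b b' Ib Ib' Ab Ab').
move=> [i|a] [j|b] //= Vx Vy xy.
- case: ltngtP xy => // ij _; first by apply: alternate_clique; lia.
  by apply/alternate_sym/alternate_clique; lia.
- exact: mixed.
- exact/alternate_sym/mixed.
Qed.
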